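(* Let $\mathbb{T}$ be a bounded time scale, $\alpha=\inf\mathbb{T}$, $\beta=\rho(\sup\mathbb{T})$ with $\alpha\neq\beta$, let $a\in\mathbb{T}^{\kappa}$, and let $q$ be a real-valued continuous function. Consider the boundary value problem consisting of $$-y^{\Delta\Delta}(t)+q(t)\,y(a)=\lambda\, y^{\sigma}(t),\qquad t\in\mathbb{T}^{\kappa^{2}},$$ together with the boundary conditions $U(y)=0$, $V(y)=0$, where $$U(y)=a_{11}y(\alpha)+a_{12}y^{\Delta}(\alpha)+a_{21}y(\beta)+a_{22}y^{\Delta}(\beta),\qquad V(y)=b_{11}y(\alpha)+b_{12}y^{\Delta}(\alpha)+b_{21}y(\beta)+b_{22}y^{\Delta}(\beta),$$ with real coefficients $a_{ij},b_{ij}$ ($i,j=1,2$). Let $S(t,\lambda)$, $C(t,\lambda)$ be the solutions of the equation with $S(a,\lambda)=0$, $S^{\Delta}(a,\lambda)=1$, $C(a,\lambda)=1$, $C^{\Delta}(a,\lambda)=0$, and define $$\Delta(\lambda)=\det\begin{pmatrix}U(C) & V(C)\\ U(S) & V(S)\end{pmatrix}=U(C(\cdot,\lambda))V(S(\cdot,\lambda))-V(C(\cdot,\lambda))U(S(\cdot,\lambda)).$$ Then the zeros of $\Delta(\lambda)$ coincide with the eigenvalues of this boundary value problem (i.e. with the values $\lambda\in\mathbb{C}$ for which the problem has a nontrivial solution).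
   Context: For a time scale $\mathbb{T}$, $\sigma$ and $\rho$ are the forward and backward jump operators, $y^{\sigma}=y\circ\sigma$, $y^{\Delta}$ and $y^{\Delta\Delta}$ are the first and second delta derivatives, $\mathbb{T}^{\kappa}=\mathbb{T}\setminus(\rho(\sup\mathbb{T}),\sup\mathbb{T}]$, $\mathbb{T}^{\kappa^2}=(\mathbb{T}^{\kappa})^{\kappa}$. $\lambda\in\mathbb{C}$ is the spectral parameter. *)

From Stdlib Require Import Reals.
From Coquelicot Require Import Coquelicot.
Open Scope R_scope.

Definition is_time_scale (T : R -> Prop) : Prop :=
  (exists t, T t) /\
  (forall x, (forall eps, 0 < eps -> exists s, T s /\ Rabs (s - x) < eps) -> T x).

Definition bounded_set (T : R -> Prop) : Prop :=
  exists M, forall t, T t -> Rabs t <= M.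

(** sup and inf of T (meaningful for nonempty bounded T). *)
Definition sup_ts (T : R -> Prop) : R :=
  match Lub_Rbar T with Finite x => x | _ => 0 end.
Definition inf_ts (T : R -> Prop) : R :=
  match Glb_Rbar T with Finite x => x | _ => 0 end.

(** Forward jump sigma(t) = inf {s in T | s > t}, with inf emptyset = t;
    backward jump rho(t) = sup {s in T | s < t}, with sup emptyset = t. *)
Definition sigma_ts (T : R -> Prop) (t : R) : R :=
  match Glb_Rbar (fun s => T s /\ t < s) with Finite x => x | _ => t end.
Definition rho_ts (T : R -> Prop) (t : R) : R :=
  match Lub_Rbar (fun s => T s /\ s < t) with Finite x => x | _ => t end.

Definition kappa_ts (T : R -> Prop) (t : R) : Prop :=
  T t /\ ~ (rho_ts T (sup_ts T) < t /\ t <= sup_ts T).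

Definition is_delta_deriv (T : R -> Prop) (f : R -> C) (t : R) (d : C) : Prop :=
  forall eps, 0 < eps -> exists delta, 0 < delta /\
    forall s, T s -> Rabs (t - s) < delta ->
      Cmod (Cminus (Cminus (f (sigma_ts T t)) (f s))
                   (Cmult d (RtoC (sigma_ts T t - s))))
        <= eps * Rabs (sigma_ts T t - s).

Definition continuous_on_ts (T : R -> Prop) (q : R -> R) : Prop :=
  forall t, T t -> forall eps, 0 < eps -> exists delta, 0 < delta /\
    forall s, T s -> Rabs (s - t) < delta -> Rabs (q s - q t) < eps.

(** y solves -y^{DD}(t) + q(t) y(a) = lam y^sigma(t), t in T^{kappa^2};
    y1 is the delta derivative y^D of y on T^kappa. *)
Definition is_solution (T : R -> Prop) (q : R -> R) (a : R) (lam : C)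
    (y y1 : R -> C) : Prop :=
  (forall t, kappa_ts T t -> is_delta_deriv T y t (y1 t)) /\
  exists y2 : R -> C,
    forall t, kappa_ts (kappa_ts T) t ->
      is_delta_deriv (kappa_ts T) y1 t (y2 t) /\
      Cplus (Copp (y2 t)) (Cmult (RtoC (q t)) (y a))
        = Cmult lam (y (sigma_ts T t)).

Definition bform (c11 c12 c21 c22 al be : R) (y y1 : R -> C) : C :=
  Cplus (Cplus (Cmult (RtoC c11) (y al)) (Cmult (RtoC c12) (y1 al)))
        (Cplus (Cmult (RtoC c21) (y be)) (Cmult (RtoC c22) (y1 be))).

Definition is_eigenvalue (T : R -> Prop) (q : R -> R) (a : R)
    (a11 a12 a21 a22 b11 b12 b21 b22 : R) (lam : C) : Prop :=
  let al := inf_ts T in let be := rho_ts T (sup_ts T) in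
  exists y y1 : R -> C,
    is_solution T q a lam y y1 /\
    bform a11 a12 a21 a22 al be y y1 = RtoC 0 /\
    bform b11 b12 b21 b22 al be y y1 = RtoC 0 /\
    exists t, T t /\ y t <> RtoC 0.

(** The eigenvalue problem reduces to linear algebra once the initial value
    problem at [a] is known to be uniquely solvable.  If [y] solves the
    equation with [y(a) = y^Δ(a) = 0], the nonlocal term [q(t) y(a)] drops out
    and [(y, y^Δ)] solves the homogeneous system [z^Δ = z1], [z1^Δ = -λ z^σ].
    The size [N = |z| + |z1|] of its state obeys the Gronwall bound
    [N(t) <= N(a) exp((2 + |λ|) |t - a|)] in both time directions, proved by
    induction on the time scale: across a right-scattered point by the
    recursion at [σ], near a right-dense point by the derivative, and at a
    left-dense point by continuity.  Hence every solution is
    [y(a) C + y^Δ(a) S], and [U(y) = V(y) = 0] becomes a 2x2 linear system in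
    [(y(a), y^Δ(a))] whose determinant is [Δ(λ)]. *)

From Stdlib Require Import Reals Lra Classical.
From Coquelicot Require Import Coquelicot.
Open Scope R_scope.

(** * Extrema of closed sets *)

Lemma Lub_Rbar_finite (E : R -> Prop) x0 B :
  E x0 -> (forall x, E x -> x <= B) ->
  exists l, Lub_Rbar E = Finite l /\ (forall x, E x -> x <= l) /\
    (forall b, (forall x, E x -> x <= b) -> l <= b).
Proof.
  intros Ex0 HB. destruct (Lub_Rbar_correct E) as [Hub Hlub].
  destruct (Lub_Rbar E) as [l| |].
  - exists l. repeat split; [exact Hub | intros b Hb; exact (Hlub (Finite b) Hb)].
  - destruct (Hlub (Finite B) HB).
  - destruct (Hub x0 Ex0).
Qed.

Lemma Glb_Rbar_finite (E : R -> Prop) x0 B :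
  E x0 -> (forall x, E x -> B <= x) ->
  exists l, Glb_Rbar E = Finite l /\ (forall x, E x -> l <= x) /\
    (forall b, (forall x, E x -> b <= x) -> b <= l).
Proof.
  intros Ex0 HB. destruct (Glb_Rbar_correct E) as [Hlb Hglb].
  destruct (Glb_Rbar E) as [l| |].
  - exists l. repeat split; [exact Hlb | intros b Hb; exact (Hglb (Finite b) Hb)].
  - destruct (Hlb x0 Ex0).
  - destruct (Hglb (Finite B) HB).
Qed.

Lemma Glb_Rbar_empty (E : R -> Prop) : (forall x, ~ E x) -> Glb_Rbar E = p_infty.
Proof.
  intros HE. apply is_glb_Rbar_unique. split.
  - intros x Ex. destruct (HE x Ex).
  - intros [b| |] _; simpl; auto.
Qed.

Lemma Lub_Rbar_empty (E : R -> Prop) : (forall x, ~ E x) -> Lub_Rbar E = m_infty.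
Proof.
  intros HE. apply is_lub_Rbar_unique. split.
  - intros x Ex. destruct (HE x Ex).
  - intros [b| |] _; simpl; auto.
Qed.

Lemma lub_approx (E : R -> Prop) l :
  (forall b, (forall x, E x -> x <= b) -> l <= b) ->
  forall e, 0 < e -> exists x, E x /\ l - e < x.
Proof.
  intros Hl e He. apply NNPP. intros Hn.
  enough (l <= l - e) by lra.
  apply Hl. intros x Ex. apply Rnot_lt_le. intros Hx. apply Hn. eauto.
Qed.

Lemma glb_approx (E : R -> Prop) l :
  (forall b, (forall x, E x -> b <= x) -> b <= l) ->
  forall e, 0 < e -> exists x, E x /\ x < l + e.
Proof.
  intros Hl e He. apply NNPP. intros Hn.
  enough (l + e <= l) by lra.
  apply Hl. intros x Ex. apply Rnot_lt_le. intros Hx. apply Hn. eauto.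
Qed.

Section ClosedSets.

Variable T : R -> Prop.
Hypothesis HT : is_time_scale T.

Lemma ts_lub_mem (E : R -> Prop) l : (forall x, E x -> T x) ->
  (forall x, E x -> x <= l) -> (forall b, (forall x, E x -> x <= b) -> l <= b) ->
  T l.
Proof.
  intros HE Hub Hl. apply (proj2 HT). intros e He.
  destruct (lub_approx E l Hl e He) as [x [Ex Hx]].
  exists x. split; [auto|]. specialize (Hub x Ex). apply Rabs_def1; lra.
Qed.

Lemma ts_glb_mem (E : R -> Prop) l : (forall x, E x -> T x) ->
  (forall x, E x -> l <= x) -> (forall b, (forall x, E x -> b <= x) -> b <= l) ->
  T l.
Proof.
  intros HE Hlb Hl. apply (proj2 HT). intros e He.
  destruct (glb_approx E l Hl e He) as [x [Ex Hx]].
  exists x. split; [auto|]. specialize (Hlb x Ex). apply Rabs_def1; lra.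
Qed.

End ClosedSets.

Lemma is_time_scale_opp T : is_time_scale T -> is_time_scale (fun x => T (- x)).
Proof.
  intros [[t Ht] Hclosed]. split.
  - exists (- t). rewrite Ropp_involutive. exact Ht.
  - intros x Hx. apply Hclosed. intros e He.
    destruct (Hx e He) as [s [Hs Hsx]]. exists (- s). split; [exact Hs|].
    replace (- s - - x) with (- (s - x)) by ring. rewrite Rabs_Ropp. exact Hsx.
Qed.

(** * Jump operators and induction on time scales *)

Definition right_dense (T : R -> Prop) (t : R) : Prop :=
  forall d, 0 < d -> exists s, T s /\ t < s < t + d.

Definition left_dense (T : R -> Prop) (t : R) : Prop :=
  forall d, 0 < d -> exists s, T s /\ t - d < s < t.

Definition no_point_between (T : R -> Prop) (t s : R) : Prop :=
  forall u, T u -> ~ (t < u < s).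

Lemma sigma_right_dense T t : right_dense T t -> sigma_ts T t = t.
Proof.
  intros Hrd. destruct (Hrd 1 Rlt_0_1) as [s0 [Ts0 Hs0]].
  destruct (Glb_Rbar_finite (fun s => T s /\ t < s) s0 t) as [g [Hg [Hlb Hglb]]];
    [tauto | intros x [_ Hx]; lra |].
  unfold sigma_ts. rewrite Hg.
  assert (t <= g) by (apply Hglb; intros x [_ Hx]; lra).
  apply Rle_antisym; [|assumption]. apply Rnot_lt_le. intros Htg.
  destruct (Hrd (g - t)) as [s [Ts Hs]]; [lra|].
  specialize (Hlb s (conj Ts (proj1 Hs))). lra.
Qed.

Lemma sigma_next T t s : T s -> t < s -> no_point_between T t s -> sigma_ts T t = s.
Proof.
  intros Ts Hts Hnp.
  destruct (Glb_Rbar_finite (fun u => T u /\ t < u) s t) as [g [Hg [Hlb Hglb]]];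
    [tauto | intros x [_ Hx]; lra |].
  unfold sigma_ts. rewrite Hg. apply Rle_antisym.
  - apply Hlb. tauto.
  - apply Hglb. intros u [Tu Hu]. apply Rnot_lt_le. intros Hus. exact (Hnp u Tu (conj Hu Hus)).
Qed.

Lemma sigma_max T t : (forall s, T s -> s <= t) -> sigma_ts T t = t.
Proof.
  intros Hmax. unfold sigma_ts. rewrite Glb_Rbar_empty; [reflexivity|].
  intros x [Tx Hx]. specialize (Hmax x Tx). lra.
Qed.

Lemma rho_fixed_left_dense T t : (exists s, T s /\ s < t) -> rho_ts T t = t ->
  left_dense T t.
Proof.
  intros [s0 [Ts0 Hs0]] Hrho d Hd.
  destruct (Lub_Rbar_finite (fun u => T u /\ u < t) s0 t) as [l [Hl [_ Hlub]]];
    [tauto | intros x [_ Hx]; lra |].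
  unfold rho_ts in Hrho. rewrite Hl in Hrho. subst l.
  destruct (lub_approx _ t Hlub d Hd) as [s [[Ts Hs] Hsd]]. eauto.
Qed.

Section Neighbours.

Variable T : R -> Prop.
Hypothesis HT : is_time_scale T.

Lemma right_scattered_next t s0 : T s0 -> t < s0 -> ~ right_dense T t ->
  exists s, T s /\ t < s <= s0 /\ no_point_between T t s.
Proof.
  intros Ts0 Hts0 Hnrd.
  destruct (Glb_Rbar_finite (fun u => T u /\ t < u) s0 t) as [g [_ [Hlb Hglb]]];
    [tauto | intros x [_ Hx]; lra |].
  assert (Htg : t <= g) by (apply Hglb; intros x [_ Hx]; lra).
  assert (Hgt : g <> t).
  { intros ->. apply Hnrd. intros d Hd.
    destruct (glb_approx _ t Hglb d Hd) as [s [[Ts Hs] Hsd]]. eauto. }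
  exists g. repeat split.
  - apply (ts_glb_mem T HT (fun u => T u /\ t < u)); tauto.
  - lra.
  - apply Hlb. tauto.
  - intros u Tu [Htu Hug]. specialize (Hlb u (conj Tu Htu)). lra.
Qed.

Lemma left_scattered_prev t s0 : T s0 -> s0 < t -> ~ left_dense T t ->
  exists r, T r /\ s0 <= r < t /\ no_point_between T r t.
Proof.
  intros Ts0 Hs0t Hnld.
  destruct (Lub_Rbar_finite (fun u => T u /\ u < t) s0 t) as [l [_ [Hub Hlub]]];
    [tauto | intros x [_ Hx]; lra |].
  assert (Hlt : l <= t) by (apply Hlub; intros x [_ Hx]; lra).
  assert (Hl : l <> t).
  { intros ->. apply Hnld. intros d Hd.
    destruct (lub_approx _ t Hlub d Hd) as [s [[Ts Hs] Hsd]]. eauto. }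
  exists l. repeat split.
  - apply (ts_lub_mem T HT (fun u => T u /\ u < t)); tauto.
  - apply Hub. tauto.
  - lra.
  - intros u Tu [Hlu Hut]. specialize (Hub u (conj Tu Hut)). lra.
Qed.

Lemma sigma_cases t :
  right_dense T t \/
  (exists s, T s /\ t < s /\ no_point_between T t s) \/
  (forall s, T s -> s <= t).
Proof.
  destruct (classic (right_dense T t)) as [Hrd|Hnrd]; [left; exact Hrd|right].
  destruct (classic (exists s, T s /\ t < s)) as [[s0 [Ts0 Hs0]]|Habove].
  - left. destruct (right_scattered_next t s0 Ts0 Hs0 Hnrd) as [s [Ts [Hs Hnp]]].
    exists s. repeat split; tauto || lra.
  - right. intros s Ts. apply Rnot_lt_le. intros Hts. apply Habove. eauto.
Qed.

(* Bohner and Peterson, Dynamic Equations on Time Scales, Theorem 1.7. *)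
Lemma ts_induction (P : R -> Prop) t0 t1 :
  T t0 -> P t0 ->
  (forall t s, T t -> T s -> t0 <= t -> t < s -> s <= t1 ->
     no_point_between T t s -> P t -> P s) ->
  (forall t, T t -> t0 <= t -> t < t1 -> right_dense T t -> P t ->
     exists d, 0 < d /\ forall s, T s -> t < s < t + d -> P s) ->
  (forall t, T t -> t0 < t -> t <= t1 -> left_dense T t ->
     (forall s, T s -> t0 <= s < t -> P s) -> P t) ->
  forall t, T t -> t0 <= t <= t1 -> P t.
Proof.
  intros Tt0 Pt0 Hscat Hrd Hld t Tt Ht. apply NNPP. intros Pt.
  set (Bad := fun s => T s /\ t0 <= s <= t1 /\ ~ P s).
  destruct (Glb_Rbar_finite Bad t t0) as [c [_ [Hlb Hglb]]];
    [unfold Bad; tauto | intros x Bx; apply Bx |].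
  assert (Hc : t0 <= c <= t) by (split; [apply Hglb; intros x Bx; apply Bx | apply Hlb; unfold Bad; tauto]).
  assert (Tc : T c) by (apply (ts_glb_mem T HT Bad); auto; intros x Bx; apply Bx).
  assert (Hgood : forall s, T s -> t0 <= s < c -> P s).
  { intros s Ts Hs. apply NNPP. intros Ps.
    assert (c <= s) by (apply Hlb; unfold Bad; repeat split; auto; lra). lra. }
  destruct (classic (P c)) as [Pc|Pc].
  - assert (Hbad_near : forall d, 0 < d -> exists s, Bad s /\ c < s < c + d).
    { intros d Hd. destruct (glb_approx Bad c Hglb d Hd) as [s [Bs Hs]].
      exists s. split; [exact Bs|]. split; [|exact Hs].
      destruct (Rle_lt_or_eq_dec c s (Hlb s Bs)) as [|<-]; [assumption|].
      destruct Bs as [_ [_ Ps]]. contradiction. }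
    destruct (Hbad_near 1 Rlt_0_1) as [s1 [[_ [Hs1 _]] Hcs1]].
    destruct (Hrd c Tc (proj1 Hc) ltac:(lra)) as [d [Hd Hnear]]; [|exact Pc|].
    + intros d Hd. destruct (Hbad_near d Hd) as [s [[Ts _] Hs]]. eauto.
    + destruct (Hbad_near d Hd) as [s [[Ts [_ Ps]] Hs]]. exact (Ps (Hnear s Ts Hs)).
  - assert (Ht0c : t0 < c).
    { destruct (Rle_lt_or_eq_dec t0 c (proj1 Hc)) as [|<-]; [assumption|contradiction]. }
    apply Pc. destruct (classic (left_dense T c)) as [Hcld|Hcnld].
    + apply Hld; auto. lra.
    + destruct (left_scattered_prev c t0 Tt0 Ht0c Hcnld) as [r [Tr [Hr Hnp]]].
      apply (Hscat r c); auto; lra.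
Qed.

End Neighbours.

Lemma ts_induction_down T (P : R -> Prop) t0 t1 :
  is_time_scale T -> T t0 -> P t0 ->
  (forall r s, T r -> T s -> t1 <= r -> r < s -> s <= t0 ->
     no_point_between T r s -> P s -> P r) ->
  (forall t, T t -> t1 < t -> t <= t0 -> left_dense T t -> P t ->
     exists d, 0 < d /\ forall s, T s -> t - d < s < t -> P s) ->
  (forall t, T t -> t1 <= t -> t < t0 -> right_dense T t ->
     (forall s, T s -> t < s <= t0 -> P s) -> P t) ->
  forall t, T t -> t1 <= t <= t0 -> P t.
Proof.
  intros HT Tt0 Pt0 Hscat Hld Hrd t Tt Ht.
  rewrite <- (Ropp_involutive t).
  apply (ts_induction (fun x => T (- x)) (is_time_scale_opp T HT) (fun x => P (- x))
           (- t0) (- t1)); rewrite ?Ropp_involutive; auto; try lra.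
  - intros u v Tu Tv Hu Huv Hv Hnp Pu. apply (Hscat (- v) (- u)); auto; try lra.
    intros w Tw Hw. apply (Hnp (- w)); rewrite ?Ropp_involutive; auto; lra.
  - intros u Tu Hu Hut1 Hrdu Pu.
    destruct (Hld (- u) Tu ltac:(lra) ltac:(lra)) as [d [Hd Hnear]]; [|exact Pu|].
    + intros d Hd. destruct (Hrdu d Hd) as [s [Ts Hs]].
      exists (- s). split; [exact Ts | lra].
    + exists d. split; [exact Hd|]. intros s Ts Hs. apply Hnear; auto; lra.
  - intros u Tu Hu Hut1 Hldu Hbelow. apply Hrd; auto; try lra.
    + intros d Hd. destruct (Hldu d Hd) as [s [Ts Hs]].
      exists (- s). split; [exact Ts | lra].
    + intros s Ts Hs. rewrite <- (Ropp_involutive s). apply Hbelow.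
      * rewrite Ropp_involutive. exact Ts.
      * lra.
Qed.

Section BoundedTimeScale.

Variable T : R -> Prop.
Hypotheses (HT : is_time_scale T) (HB : bounded_set T).

Local Notation beta := (rho_ts T (sup_ts T)).

Lemma sup_ts_spec : T (sup_ts T) /\ forall t, T t -> t <= sup_ts T.
Proof.
  destruct HB as [B HBt]. destruct HT as [[t0 Tt0] _].
  destruct (Lub_Rbar_finite T t0 B Tt0) as [l [Hl [Hub Hlub]]].
  { intros t Tt. specialize (HBt t Tt). apply Rabs_le_between in HBt. lra. }
  unfold sup_ts. rewrite Hl. split; [apply (ts_lub_mem T HT T l)|]; auto.
Qed.

Lemma inf_ts_spec : T (inf_ts T) /\ forall t, T t -> inf_ts T <= t.
Proof.
  destruct HB as [B HBt]. destruct HT as [[t0 Tt0] _].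
  destruct (Glb_Rbar_finite T t0 (- B) Tt0) as [l [Hl [Hlb Hglb]]].
  { intros t Tt. specialize (HBt t Tt). apply Rabs_le_between in HBt. lra. }
  unfold inf_ts. rewrite Hl. split; [apply (ts_glb_mem T HT T l)|]; auto.
Qed.

Lemma rho_sup_spec :
  T beta /\ beta <= sup_ts T /\ forall t, T t -> t < sup_ts T -> t <= beta.
Proof.
  destruct sup_ts_spec as [TM HM].
  destruct (classic (exists s, T s /\ s < sup_ts T)) as [[s0 [Ts0 Hs0]]|Hnone].
  - destruct (Lub_Rbar_finite (fun s => T s /\ s < sup_ts T) s0 (sup_ts T))
      as [l [Hl [Hub Hlub]]]; [tauto | intros x [_ Hx]; lra |].
    unfold rho_ts. rewrite Hl. repeat split.
    + apply (ts_lub_mem T HT (fun s => T s /\ s < sup_ts T)); tauto.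
    + apply Hlub. intros x [_ Hx]; lra.
    + intros t Tt Ht. apply Hub. tauto.
  - unfold rho_ts. rewrite Lub_Rbar_empty.
    + repeat split; [exact TM | lra |]. intros t Tt Ht. destruct Hnone. eauto.
    + intros x Hx. apply Hnone. eauto.
Qed.

Lemma kappa_iff t : kappa_ts T t <-> T t /\ t <= beta.
Proof.
  destruct rho_sup_spec as [_ [HbM _]]. unfold kappa_ts. split.
  - intros [Tt Hnot]. split; [exact Tt|]. apply Rnot_lt_le. intros Hbt.
    apply Hnot. split; [exact Hbt|]. apply sup_ts_spec, Tt.
  - intros [Tt Ht]. split; [exact Tt|]. lra.
Qed.

Lemma sup_kappa : sup_ts (kappa_ts T) = beta.
Proof.
  destruct rho_sup_spec as [Tb _].
  destruct (Lub_Rbar_finite (kappa_ts T) beta beta) as [l [Hl [Hub Hlub]]].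
  - apply kappa_iff. split; [exact Tb | lra].
  - intros x Hx. apply kappa_iff in Hx. tauto.
  - replace (sup_ts (kappa_ts T)) with l by (unfold sup_ts; rewrite Hl; reflexivity).
    apply Rle_antisym.
    + apply Hlub. intros x Hx. apply kappa_iff in Hx. tauto.
    + apply Hub, kappa_iff. split; [exact Tb | lra].
Qed.

Lemma kappa2_intro t : kappa_ts T t ->
  (forall d, 0 < d -> exists s, T s /\ t - d < s < beta) ->
  kappa_ts (kappa_ts T) t.
Proof.
  intros Kt Hnear. split; [exact Kt|]. rewrite sup_kappa.
  destruct (Hnear 1 Rlt_0_1) as [s0 [Ts0 Hs0]].
  destruct (Lub_Rbar_finite (fun s => kappa_ts T s /\ s < beta) s0 beta)
    as [l [Hl [Hub _]]].
  - split; [apply kappa_iff; split|]; [exact Ts0 | lra | lra].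
  - intros x [_ Hx]. lra.
  - replace (rho_ts (kappa_ts T) beta) with l
      by (unfold rho_ts at 1; rewrite Hl; reflexivity).
    intros [Hlt _].
    destruct (Hnear (t - l)) as [s [Ts Hs]]; [lra|].
    assert (s <= l) by (apply Hub; split; [apply kappa_iff; split|]; auto; lra).
    lra.
Qed.

Lemma kappa2_of_lt t : T t -> t < beta -> kappa_ts (kappa_ts T) t.
Proof.
  intros Tt Ht. apply kappa2_intro.
  - apply kappa_iff. split; [exact Tt | lra].
  - intros d Hd. exists t. split; [exact Tt | lra].
Qed.

Lemma kappa2_of_left_dense t : kappa_ts T t -> left_dense T t ->
  kappa_ts (kappa_ts T) t.
Proof.
  intros Kt Hld. apply kappa2_intro; [exact Kt|].
  apply kappa_iff in Kt. intros d Hd. destruct (Hld d Hd) as [s [Ts Hs]].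
  exists s. split; [exact Ts | lra].
Qed.

Lemma kappa_inf : kappa_ts T (inf_ts T).
Proof.
  destruct inf_ts_spec as [Tm Hm]. destruct rho_sup_spec as [Tb _].
  apply kappa_iff. split; [exact Tm | apply Hm, Tb].
Qed.

Lemma kappa_beta : kappa_ts T beta.
Proof.
  destruct rho_sup_spec as [Tb _]. apply kappa_iff. split; [exact Tb | lra].
Qed.

End BoundedTimeScale.

(** * Delta derivatives *)

Lemma Rle_eps_mul_le0 x c : 0 <= c -> (forall e, 0 < e -> x <= e * c) -> x <= 0.
Proof.
  intros Hc Hx. apply Rle_plus_epsilon. intros eps Heps.
  specialize (Hx (eps / (c + 1)) ltac:(apply Rdiv_lt_0_compat; lra)).
  enough (eps / (c + 1) * c <= eps) by lra.
  apply Rmult_le_reg_r with (c + 1); [lra|].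
  replace (eps / (c + 1) * c * (c + 1)) with (eps * c) by (field; lra). nra.
Qed.

Lemma Cmult_integral x y : (x * y)%C = RtoC 0 -> x = RtoC 0 \/ y = RtoC 0.
Proof.
  intros Hxy. apply (f_equal Cmod) in Hxy. rewrite Cmod_mult, Cmod_0 in Hxy.
  apply Rmult_integral in Hxy as [H|H]; [left|right]; apply Cmod_eq_0, H.
Qed.

Lemma Cmod_add_mul_le x d r : Cmod (x + d * RtoC r)%C <= Cmod x + Cmod d * Rabs r.
Proof. rewrite <- Cmod_R, <- Cmod_mult. apply Cmod_triangle. Qed.

Lemma Rabs_Cmod_sub_le x y : Rabs (Cmod x - Cmod y) <= Cmod (x - y)%C.
Proof.
  apply Rabs_le. split.
  - enough (Cmod y <= Cmod x + Cmod (x - y)%C) by lra.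
    replace y with (x + - (x - y))%C at 1 by ring.
    rewrite <- (Cmod_opp (x - y)%C). apply Cmod_triangle.
  - enough (Cmod x <= Cmod y + Cmod (x - y)%C) by lra.
    replace x with (y + (x - y))%C at 1 by ring. apply Cmod_triangle.
Qed.

Definition lincomb (a1 a2 : C) (f g : R -> C) : R -> C :=
  fun x => (a1 * f x + a2 * g x)%C.

Section DeltaDerivative.

Variables (T : R -> Prop) (f : R -> C) (t : R) (d : C).
Hypotheses (Tt : T t) (Hd : is_delta_deriv T f t d).

Local Notation mu := (sigma_ts T t - t).

Lemma delta_deriv_step : f (sigma_ts T t) = (f t + d * RtoC mu)%C.
Proof.
  set (X := (f (sigma_ts T t) - f t - d * RtoC mu)%C).
  enough (X = RtoC 0) by (unfold X in *; rewrite <- (Cplus_0_r (f t + _)), <- H; ring).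
  apply Cmod_eq_0, Rle_antisym; [|apply Cmod_ge_0].
  apply (Rle_eps_mul_le0 _ (Rabs mu)); [apply Rabs_pos|]. intros e He.
  destruct (Hd e He) as [del [Hdel Hfd]]. apply Hfd; [exact Tt|].
  rewrite Rminus_eq_0, Rabs_R0. exact Hdel.
Qed.

Lemma delta_deriv_local_bound e : 0 < e ->
  exists del, 0 < del /\ forall s, T s -> Rabs (t - s) < del ->
    Cmod (f s - f t)%C <= e * (Rabs mu + Rabs (s - t)) + Cmod d * Rabs (s - t).
Proof.
  intros He. destruct (Hd e He) as [del [Hdel Hfd]]. exists del. split; [exact Hdel|].
  intros s Ts Hs. specialize (Hfd s Ts Hs).
  set (X := (f (sigma_ts T t) - f s - d * RtoC (sigma_ts T t - s))%C) in Hfd.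
  replace (f s - f t)%C with (- X + d * RtoC (s - t))%C
    by (unfold X; rewrite delta_deriv_step, !RtoC_minus; ring).
  eapply Rle_trans; [apply Cmod_add_mul_le|]. rewrite Cmod_opp.
  apply Rplus_le_compat_r. eapply Rle_trans; [exact Hfd|].
  apply Rmult_le_compat_l; [lra|].
  replace (sigma_ts T t - s) with (mu + (t - s)) by ring.
  eapply Rle_trans; [apply Rabs_triang|]. rewrite (Rabs_minus_sym t s). lra.
Qed.

Lemma delta_deriv_continuous eta : 0 < eta ->
  exists del, 0 < del /\ forall s, T s -> Rabs (t - s) < del -> Cmod (f s - f t)%C <= eta.
Proof.
  intros Heta. pose proof (Rabs_pos mu). pose proof (Cmod_ge_0 d).
  set (e := eta / (2 * (Rabs mu + 1))).
  assert (He : 0 < e) by (apply Rdiv_lt_0_compat; lra).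
  destruct (delta_deriv_local_bound e He) as [del [Hdel Hbound]].
  set (r := Rmin 1 (eta / (2 * (Cmod d + 1)))).
  assert (Hr : 0 < r) by (apply Rmin_pos; [lra | apply Rdiv_lt_0_compat; lra]).
  exists (Rmin del r). split; [apply Rmin_pos; lra|].
  intros s Ts Hs. pose proof (Rmin_l del r). pose proof (Rmin_r del r).
  assert (r <= 1) by apply Rmin_l.
  assert (r <= eta / (2 * (Cmod d + 1))) by apply Rmin_r.
  rewrite Rabs_minus_sym in Hs.
  eapply Rle_trans; [apply Hbound; auto; rewrite Rabs_minus_sym; lra|].
  assert (e * (Rabs mu + Rabs (s - t)) <= eta / 2).
  { apply Rle_trans with (e * (Rabs mu + 1)); [apply Rmult_le_compat_l; lra|].
    unfold e. right. field. lra. }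
  assert (Cmod d * Rabs (s - t) <= eta / 2).
  { apply Rle_trans with ((Cmod d + 1) * (eta / (2 * (Cmod d + 1)))).
    - apply Rmult_le_compat; try lra. apply Rabs_pos.
    - right. field. lra. }
  lra.
Qed.

Lemma delta_deriv_right_dense_bound e : sigma_ts T t = t -> 0 < e ->
  exists del, 0 < del /\ forall s, T s -> Rabs (t - s) < del ->
    Cmod (f s - f t)%C <= (Cmod d + e) * Rabs (s - t).
Proof.
  intros Hsigma He. destruct (delta_deriv_local_bound e He) as [del [Hdel Hbound]].
  exists del. split; [exact Hdel|]. intros s Ts Hs.
  eapply Rle_trans; [apply Hbound; auto|].
  rewrite Hsigma, Rminus_eq_0, Rabs_R0. lra.
Qed.

Lemma delta_deriv_vanishing_at_limit : sigma_ts T t = t ->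
  (forall del, 0 < del -> exists s, T s /\ s <> t /\ Rabs (t - s) < del) ->
  (forall s, T s -> f s = RtoC 0) -> d = RtoC 0.
Proof.
  intros Hsigma Hlim Hzero. apply Cmod_eq_0, Rle_antisym; [|apply Cmod_ge_0].
  apply Rle_plus_epsilon. intros e He.
  destruct (Hd e He) as [del [Hdel Hfd]].
  destruct (Hlim del Hdel) as [s [Ts [Hst Hs]]].
  specialize (Hfd s Ts Hs). rewrite Hsigma, (Hzero s Ts), (Hzero t Tt) in Hfd.
  replace (RtoC 0 - RtoC 0 - d * RtoC (t - s))%C with (- (d * RtoC (t - s)))%C
    in Hfd by ring.
  rewrite Cmod_opp, Cmod_mult, Cmod_R in Hfd.
  assert (0 < Rabs (t - s)) by (apply Rabs_pos_lt; lra).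
  enough (Cmod d <= e) by lra.
  apply Rmult_le_reg_r with (Rabs (t - s)); assumption.
Qed.

End DeltaDerivative.

Lemma delta_deriv_lincomb T f g df dg t a1 a2 :
  is_delta_deriv T f t df -> is_delta_deriv T g t dg ->
  is_delta_deriv T (lincomb a1 a2 f g) t (a1 * df + a2 * dg)%C.
Proof.
  intros Hf Hg e He. pose proof (Cmod_ge_0 a1). pose proof (Cmod_ge_0 a2).
  set (N := 1 + Cmod a1 + Cmod a2).
  assert (He' : 0 < e / N) by (apply Rdiv_lt_0_compat; unfold N; lra).
  destruct (Hf _ He') as [d1 [Hd1 Hf1]]. destruct (Hg _ He') as [d2 [Hd2 Hg1]].
  exists (Rmin d1 d2). split; [apply Rmin_pos; lra|].
  intros s Ts Hs. pose proof (Rmin_l d1 d2). pose proof (Rmin_r d1 d2).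
  specialize (Hf1 s Ts ltac:(lra)). specialize (Hg1 s Ts ltac:(lra)).
  set (sg := sigma_ts T t) in *. set (r := Rabs (sg - s)) in *.
  set (Xf := (f sg - f s - df * RtoC (sg - s))%C) in Hf1.
  set (Xg := (g sg - g s - dg * RtoC (sg - s))%C) in Hg1.
  unfold lincomb.
  replace (_ - _ - _)%C with (a1 * Xf + a2 * Xg)%C by (unfold Xf, Xg; ring).
  eapply Rle_trans; [apply Cmod_triangle|]. rewrite !Cmod_mult.
  assert (0 <= r) by apply Rabs_pos.
  assert (Cmod a1 * Cmod Xf <= Cmod a1 * (e / N * r)) by (apply Rmult_le_compat_l; auto).
  assert (Cmod a2 * Cmod Xg <= Cmod a2 * (e / N * r)) by (apply Rmult_le_compat_l; auto).
  assert ((Cmod a1 + Cmod a2) * (e / N * r) <= e * r).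
  { apply Rle_trans with (N * (e / N * r)).
    - apply Rmult_le_compat_r; [apply Rmult_le_pos; lra | unfold N; lra].
    - right. field. unfold N; lra. }
  nra.
Qed.

(* If [t] is the maximum of [T] then [t = sup T = β]; since [α <> β], [t] is then
   left-dense, so [f^Δ(t)] is still determined by nearby values. *)
Lemma delta_deriv_of_vanishing T f t d :
  is_time_scale T -> bounded_set T -> inf_ts T <> rho_ts T (sup_ts T) ->
  kappa_ts T t -> (forall s, T s -> f s = RtoC 0) -> is_delta_deriv T f t d ->
  d = RtoC 0.
Proof.
  intros HT HB Hne Kt Hzero Hd.
  destruct (proj1 (kappa_iff T HT HB t) Kt) as [Tt Htb].
  destruct (sigma_cases T HT t) as [Hrd | [[s [Ts [Hts Hnp]]] | Hmax]].
  - apply (delta_deriv_vanishing_at_limit T f t d Tt Hd (sigma_right_dense T t Hrd));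
      [|exact Hzero].
    intros del Hdel. destruct (Hrd del Hdel) as [s [Ts Hs]].
    exists s. repeat split; [exact Ts | lra | apply Rabs_def1; lra].
  - pose proof (delta_deriv_step T f t d Tt Hd) as Hstep.
    rewrite (sigma_next T t s Ts Hts Hnp), (Hzero s Ts), (Hzero t Tt) in Hstep.
    assert (Hmul : (d * RtoC (s - t))%C = RtoC 0).
    { replace (d * RtoC (s - t))%C with (RtoC 0 + d * RtoC (s - t))%C by ring.
      symmetry. exact Hstep. }
    destruct (Cmult_integral _ _ Hmul) as [|Hst]; [assumption|].
    apply (f_equal fst) in Hst. simpl in Hst. lra.
  - destruct (sup_ts_spec T HT HB) as [TM HM].
    destruct (inf_ts_spec T HT HB) as [Tm Hm].
    destruct (rho_sup_spec T HT HB) as [_ [HbM _]].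
    assert (Hsup : t = sup_ts T) by (specialize (Hmax _ TM); specialize (HM t Tt); lra).
    assert (Hld : left_dense T t).
    { rewrite Hsup. apply rho_fixed_left_dense; [|lra].
      exists (inf_ts T). split; [exact Tm|]. specialize (Hm _ TM). lra. }
    apply (delta_deriv_vanishing_at_limit T f t d Tt Hd (sigma_max T t Hmax));
      [|exact Hzero].
    intros del Hdel. destruct (Hld del Hdel) as [s [Ts Hs]].
    exists s. repeat split; [exact Ts | lra | apply Rabs_def1; lra].
Qed.

(** * Gronwall estimates for the homogeneous system *)

Definition state_norm (z z1 : R -> C) (t : R) : R := Cmod (z t) + Cmod (z1 t).

Lemma Rabs_state_norm_sub_le z z1 s t :
  Rabs (state_norm z z1 s - state_norm z z1 t) <= Cmod (z s - z t)%C + Cmod (z1 s - z1 t)%C.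
Proof.
  unfold state_norm.
  replace (Cmod (z s) + Cmod (z1 s) - (Cmod (z t) + Cmod (z1 t)))
    with ((Cmod (z s) - Cmod (z t)) + (Cmod (z1 s) - Cmod (z1 t))) by ring.
  eapply Rle_trans; [apply Rabs_triang|].
  apply Rplus_le_compat; apply Rabs_Cmod_sub_le.
Qed.

Lemma exp_le_compat x y : x <= y -> exp x <= exp y.
Proof. intros [Hxy| ->]; [left; apply exp_increasing, Hxy | right; reflexivity]. Qed.

Lemma two_step_growth m1 m2 p q u v :
  0 <= m1 -> 0 <= m2 -> 0 <= u -> 0 <= v -> 0 <= p ->
  p <= u + m1 * v -> q <= v + m2 * p -> p + q <= exp (m1 + m2) * (u + v).
Proof.
  intros Hm1 Hm2 Hu Hv Hp Hpu Hqv.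
  apply Rle_trans with ((1 + m1) * (1 + m2) * (u + v)).
  - assert (m2 * p <= m2 * (u + m1 * v)) by (apply Rmult_le_compat_l; lra).
    assert (0 <= m1 * u) by (apply Rmult_le_pos; lra).
    assert (0 <= m1 * m2 * u) by (repeat apply Rmult_le_pos; lra).
    assert (0 <= m2 * v) by (apply Rmult_le_pos; lra).
    nra.
  - apply Rmult_le_compat_r; [lra|]. rewrite exp_plus.
    apply Rmult_le_compat; try lra; apply exp_ineq1_le.
Qed.

Lemma backward_right_dense_arith k B p q h :
  0 <= k -> 0 < B -> 0 < h -> h < / (2 * (k + 1) ^ 2) -> 0 <= q ->
  p <= q + (k * p + 2 * (B / 4)) * h -> exp ((k + 1) * h) * q < B -> p < B.
Proof.
  intros Hk HB Hh Hsmall Hq Hp Hq_lt.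
  assert (Hsmall' : 2 * (k + 1) ^ 2 * h < 1).
  { apply Rmult_lt_compat_l with (r := 2 * (k + 1) ^ 2) in Hsmall; [|nra].
    rewrite Rinv_r in Hsmall; nra. }
  assert (Hq' : (1 + (k + 1) * h) * q < B).
  { eapply Rle_lt_trans; [|exact Hq_lt].
    apply Rmult_le_compat_r; [exact Hq | apply exp_ineq1_le]. }
  apply Rnot_le_lt. intros HBp.
  assert (Hkh : k * h < 1) by nra.
  assert (B * (1 - k * h) <= q + B * h / 2) by nra.
  assert (Hprod : (1 + (k + 1) * h) * (B * (1 - k * h - h / 2)) < B).
  { eapply Rle_lt_trans; [|exact Hq']. apply Rmult_le_compat_l; nra. }
  assert ((1 + (k + 1) * h) * (1 - k * h - h / 2) < 1).
  { apply Rmult_lt_reg_l with B; [exact HB|]. nra. }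
  nra.
Qed.

Section HomogeneousSystem.

Variables (T : R -> Prop) (lam : C) (z z1 z2 : R -> C).
Hypotheses (HT : is_time_scale T) (HB : bounded_set T).
Hypothesis z_deriv : forall t, kappa_ts T t -> is_delta_deriv T z t (z1 t).
Hypothesis z1_deriv : forall t, kappa_ts (kappa_ts T) t ->
  is_delta_deriv (kappa_ts T) z1 t (z2 t).
Hypothesis z2_eq : forall t, kappa_ts (kappa_ts T) t ->
  z2 t = (- (lam * z (sigma_ts T t)))%C.

Local Notation beta := (rho_ts T (sup_ts T)).
Local Notation N := (state_norm z z1).
Local Notation L := (2 + Cmod lam).

Lemma state_norm_nonneg t : 0 <= N t.
Proof. unfold state_norm. pose proof (Cmod_ge_0 (z t)). pose proof (Cmod_ge_0 (z1 t)). lra. Qed.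

Lemma state_norm_step c s : kappa_ts T c -> T s -> c < s <= beta ->
  no_point_between T c s ->
  N s <= exp (L * (s - c)) * N c /\ N c <= exp (L * (s - c)) * N s.
Proof.
  intros Kc Ts Hcs Hnp.
  assert (K2c : kappa_ts (kappa_ts T) c) by (apply (kappa2_of_lt T HT HB); [apply Kc | lra]).
  assert (Ks : kappa_ts T s) by (apply (kappa_iff T HT HB); split; [exact Ts | lra]).
  assert (Hsig : sigma_ts T c = s) by (apply sigma_next; auto; lra).
  assert (Hsig2 : sigma_ts (kappa_ts T) c = s).
  { apply sigma_next; [exact Ks | lra|]. intros u Ku. apply Hnp, Ku. }
  pose proof (delta_deriv_step T z c (z1 c) (proj1 Kc) (z_deriv c Kc)) as Sz.
  pose proof (delta_deriv_step (kappa_ts T) z1 c (z2 c) Kc (z1_deriv c K2c)) as Sz1.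
  rewrite (z2_eq c K2c), Hsig in Sz1. rewrite Hsig2 in Sz1. rewrite Hsig in Sz.
  set (mu := s - c) in *.
  assert (Hmu : Rabs mu = mu) by (apply Rabs_right; unfold mu; lra).
  assert (Hl : 0 <= Cmod lam) by apply Cmod_ge_0.
  assert (Hexp : exp (mu + Cmod lam * mu) <= exp (L * mu))
    by (apply exp_le_compat; unfold mu in *; nra).
  assert (Hexp' : exp (Cmod lam * mu + mu) <= exp (L * mu))
    by (rewrite Rplus_comm; exact Hexp).
  pose proof (Cmod_ge_0 (z c)). pose proof (Cmod_ge_0 (z1 c)).
  pose proof (Cmod_ge_0 (z s)). pose proof (Cmod_ge_0 (z1 s)).
  assert (Hmu0 : 0 <= mu) by (unfold mu; lra).
  unfold state_norm. split.
  - assert (Bz : Cmod (z s) <= Cmod (z c) + mu * Cmod (z1 c)).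
    { rewrite Sz. eapply Rle_trans; [apply Cmod_add_mul_le|]. rewrite Hmu. lra. }
    assert (Bz1 : Cmod (z1 s) <= Cmod (z1 c) + Cmod lam * mu * Cmod (z s)).
    { rewrite Sz1. eapply Rle_trans; [apply Cmod_add_mul_le|].
      rewrite Cmod_opp, Cmod_mult, Hmu. lra. }
    eapply Rle_trans; [|apply Rmult_le_compat_r; [|exact Hexp]]; [|lra].
    apply two_step_growth; try assumption. apply Rmult_le_pos; assumption.
  - assert (Bz1 : Cmod (z1 c) <= Cmod (z1 s) + Cmod lam * mu * Cmod (z s)).
    { replace (z1 c) with (z1 s + lam * z s * RtoC mu)%C by (rewrite Sz1; ring).
      eapply Rle_trans; [apply Cmod_add_mul_le|]. rewrite Cmod_mult, Hmu. lra. }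
    assert (Bz : Cmod (z c) <= Cmod (z s) + mu * Cmod (z1 c)).
    { replace (z c) with (z s + - z1 c * RtoC mu)%C by (rewrite Sz; ring).
      eapply Rle_trans; [apply Cmod_add_mul_le|]. rewrite Cmod_opp, Hmu. lra. }
    eapply Rle_trans; [|apply Rmult_le_compat_r; [|exact Hexp']]; [|lra].
    rewrite (Rplus_comm (Cmod (z c))), (Rplus_comm (Cmod (z s))).
    apply two_step_growth; try assumption. apply Rmult_le_pos; assumption.
Qed.

Lemma state_norm_right_dense c eta :
  kappa_ts T c -> c < beta -> right_dense T c -> 0 < eta ->
  exists del, 0 < del /\ forall s, T s -> c < s < c + del ->
    Rabs (N s - N c) <= ((1 + Cmod lam) * N c + 2 * eta) * (s - c).
Proof.
  intros Kc Hcb Hrd Heta.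
  assert (K2c : kappa_ts (kappa_ts T) c)
    by (apply (kappa2_of_lt T HT HB); [apply Kc | lra]).
  assert (Hsig : sigma_ts T c = c) by (apply sigma_right_dense, Hrd).
  assert (Hsig2 : sigma_ts (kappa_ts T) c = c).
  { apply sigma_right_dense. intros d Hd.
    destruct (Hrd (Rmin d (beta - c))) as [s [Ts Hs]]; [apply Rmin_pos; lra|].
    pose proof (Rmin_l d (beta - c)). pose proof (Rmin_r d (beta - c)).
    exists s. split; [apply (kappa_iff T HT HB); split|]; [exact Ts | lra | lra]. }
  destruct (delta_deriv_right_dense_bound T z c (z1 c) (proj1 Kc) (z_deriv c Kc)
              eta Hsig Heta) as [d1 [Hd1 Bz]].
  destruct (delta_deriv_right_dense_bound (kappa_ts T) z1 c (z2 c) Kc (z1_deriv c K2c)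
              eta Hsig2 Heta) as [d2 [Hd2 Bz1]].
  rewrite (z2_eq c K2c), Hsig, Cmod_opp, Cmod_mult in Bz1.
  exists (Rmin d1 (Rmin d2 (beta - c))).
  split; [apply Rmin_pos; [|apply Rmin_pos]; lra|].
  intros s Ts Hs.
  pose proof (Rmin_l d1 (Rmin d2 (beta - c))). pose proof (Rmin_r d1 (Rmin d2 (beta - c))).
  pose proof (Rmin_l d2 (beta - c)). pose proof (Rmin_r d2 (beta - c)).
  assert (Hcs : Rabs (c - s) < Rmin d1 (Rmin d2 (beta - c))) by (apply Rabs_def1; lra).
  assert (Hsc : Rabs (s - c) = s - c) by (apply Rabs_right; lra).
  assert (Ks : kappa_ts T s) by (apply (kappa_iff T HT HB); split; [exact Ts | lra]).
  specialize (Bz s Ts ltac:(lra)). specialize (Bz1 s Ks ltac:(lra)).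
  rewrite Hsc in Bz, Bz1.
  eapply Rle_trans; [apply Rabs_state_norm_sub_le|]. unfold state_norm.
  assert (0 <= (Cmod (z c) + Cmod lam * Cmod (z1 c)) * (s - c)).
  { apply Rmult_le_pos; [|lra].
    pose proof (Cmod_ge_0 (z c)). pose proof (Cmod_ge_0 (z1 c)).
    pose proof (Cmod_ge_0 lam). nra. }
  nra.
Qed.

Lemma state_norm_left_continuous c eta :
  kappa_ts T c -> left_dense T c -> 0 < eta ->
  exists del, 0 < del /\ forall s, T s -> c - del < s < c -> Rabs (N s - N c) <= eta.
Proof.
  intros Kc Hld Heta.
  pose proof (kappa2_of_left_dense T HT HB c Kc Hld) as K2c.
  destruct (delta_deriv_continuous T z c (z1 c) (proj1 Kc) (z_deriv c Kc) (eta / 2))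
    as [d1 [Hd1 Cz]]; [lra|].
  destruct (delta_deriv_continuous (kappa_ts T) z1 c (z2 c) Kc (z1_deriv c K2c) (eta / 2))
    as [d2 [Hd2 Cz1]]; [lra|].
  exists (Rmin d1 d2). split; [apply Rmin_pos; lra|].
  intros s Ts Hs. pose proof (Rmin_l d1 d2). pose proof (Rmin_r d1 d2).
  assert (Hcs : Rabs (c - s) < Rmin d1 d2) by (apply Rabs_def1; lra).
  apply (kappa_iff T HT HB) in Kc as Hc.
  assert (Ks : kappa_ts T s) by (apply (kappa_iff T HT HB); split; [exact Ts | lra]).
  specialize (Cz s Ts ltac:(lra)). specialize (Cz1 s Ks ltac:(lra)).
  eapply Rle_trans; [apply Rabs_state_norm_sub_le | lra].
Qed.

Lemma state_norm_right_dense_growth u X :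
  kappa_ts T u -> u < beta -> right_dense T u -> N u <= X -> 0 < X ->
  exists d, 0 < d /\ forall s, T s -> u < s < u + d -> N s <= exp (L * (s - u)) * X.
Proof.
  intros Ku Hub Hrd HNu HX.
  destruct (state_norm_right_dense u (X / 2) Ku Hub Hrd) as [d [Hd Hnear]]; [lra|].
  exists d. split; [exact Hd|]. intros s Ts Hs.
  specialize (Hnear s Ts Hs). apply Rabs_le_between in Hnear.
  pose proof (exp_ineq1_le (L * (s - u))). pose proof (Cmod_ge_0 lam).
  assert ((1 + Cmod lam) * N u * (s - u) <= (1 + Cmod lam) * X * (s - u)).
  { apply Rmult_le_compat_r; [lra|]. apply Rmult_le_compat_l; lra. }
  nra.
Qed.

Lemma state_norm_right_dense_decay u B r :
  kappa_ts T u -> u < beta -> right_dense T u -> 0 < B -> 0 < r ->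
  (forall s, T s -> u < s < u + r -> exp (L * (s - u)) * N s < B) -> N u < B.
Proof.
  intros Ku Hub Hrd HB0 Hr Hright. pose proof (Cmod_ge_0 lam).
  destruct (state_norm_right_dense u (B / 4) Ku Hub Hrd) as [d [Hd Hnear]]; [lra|].
  set (hmax := / (2 * (1 + Cmod lam + 1) ^ 2)).
  assert (Hhmax : 0 < hmax) by (apply Rinv_0_lt_compat; nra).
  destruct (Hrd (Rmin d (Rmin r hmax))) as [s [Ts Hs]].
  { apply Rmin_pos; [|apply Rmin_pos]; lra. }
  pose proof (Rmin_l d (Rmin r hmax)). pose proof (Rmin_r d (Rmin r hmax)).
  pose proof (Rmin_l r hmax). pose proof (Rmin_r r hmax).
  specialize (Hnear s Ts ltac:(lra)). apply Rabs_le_between in Hnear.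
  specialize (Hright s Ts ltac:(lra)).
  apply (backward_right_dense_arith (1 + Cmod lam) B (N u) (N s) (s - u));
    [lra | exact HB0 | lra | fold hmax; lra | apply state_norm_nonneg | lra |].
  replace (1 + Cmod lam + 1) with L by ring. exact Hright.
Qed.

Lemma state_norm_forward_eps a t eps :
  kappa_ts T a -> kappa_ts T t -> a <= t -> 0 < eps ->
  N t <= (N a + eps) * exp (L * (t - a)).
Proof.
  intros Ka Kt Hat Heps.
  pose proof (state_norm_nonneg a). pose proof (Cmod_ge_0 lam).
  set (X x := (N a + eps) * exp (L * (x - a))).
  assert (HX : forall x, 0 < X x)
    by (intros x; apply Rmult_lt_0_compat; [lra | apply exp_pos]).
  assert (HXshift : forall x y, X y = exp (L * (y - x)) * X x).
  { intros x y. unfold X.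
    replace (L * (y - a)) with (L * (y - x) + L * (x - a)) by ring.
    rewrite exp_plus. ring. }
  destruct (proj1 (kappa_iff T HT HB t) Kt) as [Tt Htb].
  destruct (proj1 (kappa_iff T HT HB a) Ka) as [Ta Hab].
  assert (Kin : forall x, T x -> x <= beta -> kappa_ts T x)
    by (intros x Tx Hx; apply (kappa_iff T HT HB); split; assumption).
  change (N t <= X t).
  apply (ts_induction T HT (fun x => N x <= X x) a beta Ta); [| | | | exact Tt | lra].
  - unfold X. rewrite Rminus_eq_0, Rmult_0_r, exp_0. lra.
  - intros u s Tu Ts Hau Hus Hsb Hnp Pu.
    destruct (state_norm_step u s (Kin u Tu ltac:(lra)) Ts (conj Hus Hsb) Hnp) as [Hstep _].
    rewrite (HXshift u s). eapply Rle_trans; [exact Hstep|].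
    apply Rmult_le_compat_l; [apply Rlt_le, exp_pos | exact Pu].
  - intros u Tu Hau Hub Hrd Pu.
    destruct (state_norm_right_dense_growth u (X u) (Kin u Tu ltac:(lra)) Hub Hrd Pu (HX u))
      as [d [Hd Hnear]].
    exists d. split; [exact Hd|]. intros s Ts Hs. rewrite (HXshift u s). exact (Hnear s Ts Hs).
  - intros u Tu Hau Hub Hld Hbelow. apply Rle_plus_epsilon. intros eta Heta.
    destruct (state_norm_left_continuous u eta (Kin u Tu Hub) Hld Heta) as [d [Hd Hnear]].
    destruct (Hld (Rmin d (u - a))) as [s [Ts Hs]]; [apply Rmin_pos; lra|].
    pose proof (Rmin_l d (u - a)). pose proof (Rmin_r d (u - a)).
    specialize (Hnear s Ts ltac:(lra)). apply Rabs_le_between in Hnear.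
    specialize (Hbelow s Ts ltac:(lra)).
    assert (X s <= X u).
    { apply Rmult_le_compat_l; [lra|]. apply exp_le_compat. nra. }
    lra.
Qed.

(* Strict, unlike the forward bound: continuity at a left-dense point
   propagates only a strict inequality to the left. *)
Lemma state_norm_backward_eps a t eps :
  kappa_ts T a -> kappa_ts T t -> t <= a -> 0 < eps ->
  N t < (N a + eps) * exp (L * (a - t)).
Proof.
  intros Ka Kt Hta Heps.
  pose proof (state_norm_nonneg a). pose proof (Cmod_ge_0 lam).
  set (Y x := (N a + eps) * exp (L * (a - x))).
  assert (HY : forall x, 0 < Y x)
    by (intros x; apply Rmult_lt_0_compat; [lra | apply exp_pos]).
  assert (HYshift : forall x y, Y x = exp (L * (y - x)) * Y y).
  { intros x y. unfold Y.
    replace (L * (a - x)) with (L * (y - x) + L * (a - y)) by ring.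
    rewrite exp_plus. ring. }
  destruct (proj1 (kappa_iff T HT HB t) Kt) as [Tt Htb].
  destruct (proj1 (kappa_iff T HT HB a) Ka) as [Ta Hab].
  assert (Kin : forall x, T x -> x <= beta -> kappa_ts T x)
    by (intros x Tx Hx; apply (kappa_iff T HT HB); split; assumption).
  change (N t < Y t).
  apply (ts_induction_down T (fun x => N x < Y x) a t HT Ta); [| | | | exact Tt | lra].
  - unfold Y. rewrite Rminus_eq_0, Rmult_0_r, exp_0. lra.
  - intros r s Tr Ts Htr Hrs Hsa Hnp Ps.
    destruct (state_norm_step r s (Kin r Tr ltac:(lra)) Ts ltac:(lra) Hnp) as [_ Hstep].
    rewrite (HYshift r s). eapply Rle_lt_trans; [exact Hstep|].
    apply Rmult_lt_compat_l; [apply exp_pos | exact Ps].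
  - intros u Tu Htu Hua Hld Pu.
    destruct (state_norm_left_continuous u ((Y u - N u) / 2) (Kin u Tu ltac:(lra)) Hld)
      as [d [Hd Hnear]]; [lra|].
    exists d. split; [exact Hd|]. intros s Ts Hs.
    specialize (Hnear s Ts Hs). apply Rabs_le_between in Hnear.
    assert (Y u <= Y s).
    { apply Rmult_le_compat_l; [lra|]. apply exp_le_compat. nra. }
    lra.
  - intros u Tu Htu Hua Hrd Habove.
    apply (state_norm_right_dense_decay u (Y u) (a - u) (Kin u Tu ltac:(lra)) ltac:(lra) Hrd
             (HY u) ltac:(lra)).
    intros s Ts Hs. rewrite (HYshift u s).
    apply Rmult_lt_compat_l; [apply exp_pos | apply Habove; [exact Ts | lra]].
Qed.

Lemma state_norm_forward a t : kappa_ts T a -> kappa_ts T t -> a <= t ->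
  N t <= N a * exp (L * (t - a)).
Proof.
  intros Ka Kt Hat. apply Rle_plus_epsilon. intros eps Heps.
  pose proof (exp_pos (L * (t - a))) as HE.
  pose proof (state_norm_forward_eps a t (eps / exp (L * (t - a))) Ka Kt Hat
                ltac:(apply Rdiv_lt_0_compat; assumption)) as Hfwd.
  replace (N a * exp (L * (t - a)) + eps)
    with ((N a + eps / exp (L * (t - a))) * exp (L * (t - a))) by (field; lra).
  exact Hfwd.
Qed.

Lemma state_norm_backward a t : kappa_ts T a -> kappa_ts T t -> t <= a ->
  N t <= N a * exp (L * (a - t)).
Proof.
  intros Ka Kt Hta. apply Rle_plus_epsilon. intros eps Heps.
  pose proof (exp_pos (L * (a - t))) as HE.
  pose proof (state_norm_backward_eps a t (eps / exp (L * (a - t))) Ka Kt Hta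
                ltac:(apply Rdiv_lt_0_compat; assumption)) as Hbwd.
  replace (N a * exp (L * (a - t)) + eps)
    with ((N a + eps / exp (L * (a - t))) * exp (L * (a - t))) by (field; lra).
  lra.
Qed.

Lemma state_vanishes_on_kappa a : kappa_ts T a -> z a = RtoC 0 -> z1 a = RtoC 0 ->
  forall t, kappa_ts T t -> z t = RtoC 0 /\ z1 t = RtoC 0.
Proof.
  intros Ka Hza Hz1a t Kt.
  assert (HNa : N a = 0) by (unfold state_norm; rewrite Hza, Hz1a, Cmod_0; ring).
  assert (HNt : N t <= 0).
  { destruct (Rle_lt_dec a t) as [Hat|Hta].
    - rewrite <- (Rmult_0_l (exp (L * (t - a)))), <- HNa.
      apply state_norm_forward; assumption.
    - rewrite <- (Rmult_0_l (exp (L * (a - t)))), <- HNa.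
      apply state_norm_backward; [assumption | assumption | lra]. }
  unfold state_norm in HNt.
  pose proof (Cmod_ge_0 (z t)). pose proof (Cmod_ge_0 (z1 t)).
  split; apply Cmod_eq_0; lra.
Qed.

Lemma state_vanishes_on_ts a : kappa_ts T a -> z a = RtoC 0 -> z1 a = RtoC 0 ->
  forall t, T t -> z t = RtoC 0.
Proof.
  intros Ka Hza Hz1a t Tt.
  destruct (classic (kappa_ts T t)) as [Kt|Kt].
  { apply (state_vanishes_on_kappa a); assumption. }
  destruct (sup_ts_spec T HT HB) as [_ HM].
  destruct (rho_sup_spec T HT HB) as [Tb [_ Hbelow]].
  assert (Hbt : beta < t)
    by (apply Rnot_le_lt; intros Htb; apply Kt, (kappa_iff T HT HB); split; assumption).
  assert (Hsup : t = sup_ts T)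
    by (destruct (HM t Tt) as [Hlt|]; [specialize (Hbelow t Tt Hlt); lra | assumption]).
  pose proof (kappa_beta T HT HB) as Kb.
  assert (Hsig : sigma_ts T beta = t).
  { apply sigma_next; [exact Tt | exact Hbt|]. intros u Tu Hu.
    specialize (Hbelow u Tu ltac:(lra)). lra. }
  destruct (state_vanishes_on_kappa a Ka Hza Hz1a beta Kb) as [Hzb Hz1b].
  pose proof (delta_deriv_step T z beta (z1 beta) Tb (z_deriv beta Kb)) as Hstep.
  rewrite Hsig, Hzb, Hz1b in Hstep. rewrite Hstep. ring.
Qed.

End HomogeneousSystem.

(** * Solutions, boundary forms and the characteristic determinant *)

Lemma bform_lincomb c11 c12 c21 c22 al be a1 a2 f f1 g g1 :
  bform c11 c12 c21 c22 al be (lincomb a1 a2 f g) (lincomb a1 a2 f1 g1) =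
  (a1 * bform c11 c12 c21 c22 al be f f1 + a2 * bform c11 c12 c21 c22 al be g g1)%C.
Proof. unfold bform, lincomb. ring. Qed.

Lemma solution_lincomb T q a lam y y1 g g1 a1 a2 :
  is_solution T q a lam y y1 -> is_solution T q a lam g g1 ->
  is_solution T q a lam (lincomb a1 a2 y g) (lincomb a1 a2 y1 g1).
Proof.
  intros [Dy [y2 Ey]] [Dg [g2 Eg]]. split.
  - intros t Kt. apply delta_deriv_lincomb; auto.
  - exists (lincomb a1 a2 y2 g2). intros t K2t.
    destruct (Ey t K2t) as [Dy2 Ey2]. destruct (Eg t K2t) as [Dg2 Eg2]. split.
    + apply delta_deriv_lincomb; assumption.
    + unfold lincomb.
      transitivity (a1 * (- y2 t + RtoC (q t) * y a) + a2 * (- g2 t + RtoC (q t) * g a))%C;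
        [ring | rewrite Ey2, Eg2; ring].
Qed.

Lemma solution_unique T q a lam y y1 g g1 :
  is_time_scale T -> bounded_set T -> kappa_ts T a ->
  is_solution T q a lam y y1 -> is_solution T q a lam g g1 ->
  y a = g a -> y1 a = g1 a ->
  (forall t, T t -> y t = g t) /\ (forall t, kappa_ts T t -> y1 t = g1 t).
Proof.
  intros HT HB Ka Hy Hg Ha Ha1.
  destruct (solution_lincomb T q a lam y y1 g g1 (RtoC 1) (- RtoC 1)%C Hy Hg)
    as [Dz [z2 Ez]].
  set (z := lincomb (RtoC 1) (- RtoC 1)%C y g) in *.
  set (z1 := lincomb (RtoC 1) (- RtoC 1)%C y1 g1) in *.
  assert (Hza : z a = RtoC 0) by (unfold z, lincomb; rewrite Ha; ring).
  assert (Hz1a : z1 a = RtoC 0) by (unfold z1, lincomb; rewrite Ha1; ring).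
  assert (Hz2 : forall t, kappa_ts (kappa_ts T) t -> z2 t = (- (lam * z (sigma_ts T t)))%C).
  { intros t K2t. destruct (Ez t K2t) as [_ Ezt]. rewrite Hza in Ezt.
    rewrite <- Ezt. ring. }
  assert (Hsub : forall f h : R -> C, forall t, lincomb (RtoC 1) (- RtoC 1)%C f h t = RtoC 0 -> f t = h t).
  { intros f h t Hfh.
    replace (f t) with (lincomb (RtoC 1) (- RtoC 1)%C f h t + h t)%C
      by (unfold lincomb; ring).
    rewrite Hfh. ring. }
  split.
  - intros t Tt. apply Hsub.
    apply (state_vanishes_on_ts T lam z z1 z2 HT HB Dz (fun t K2t => proj1 (Ez t K2t)) Hz2 a);
      assumption.
  - intros t Kt. apply Hsub.
    apply (state_vanishes_on_kappa T lam z z1 z2 HT HB Dz (fun t K2t => proj1 (Ez t K2t)) Hz2 a);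
      assumption.
Qed.

Lemma bform_congr T c11 c12 c21 c22 y y1 g g1 :
  is_time_scale T -> bounded_set T ->
  (forall t, T t -> y t = g t) -> (forall t, kappa_ts T t -> y1 t = g1 t) ->
  bform c11 c12 c21 c22 (inf_ts T) (rho_ts T (sup_ts T)) y y1 =
  bform c11 c12 c21 c22 (inf_ts T) (rho_ts T (sup_ts T)) g g1.
Proof.
  intros HT HB Hy Hy1. pose proof (kappa_inf T HT HB) as Ki. pose proof (kappa_beta T HT HB) as Kb.
  unfold bform. rewrite (Hy _ (proj1 Ki)), (Hy _ (proj1 Kb)), (Hy1 _ Ki), (Hy1 _ Kb).
  reflexivity.
Qed.

Lemma det2_eq0_iff u1 u2 v1 v2 :
  (u1 * v2 - v1 * u2)%C = RtoC 0 <->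
  exists c1 c2, ~ (c1 = RtoC 0 /\ c2 = RtoC 0) /\
    (c1 * u1 + c2 * u2)%C = RtoC 0 /\ (c1 * v1 + c2 * v2)%C = RtoC 0.
Proof.
  split.
  - intros Hdet.
    destruct (classic (u1 = RtoC 0 /\ u2 = RtoC 0)) as [[-> ->]|Hu].
    + destruct (classic (v1 = RtoC 0 /\ v2 = RtoC 0)) as [[-> ->]|Hv].
      * exists (RtoC 1), (RtoC 0). split; [intros [H1 _]; exact (C1_nz H1)|]. split; ring.
      * exists v2, (- v1)%C. split; [|split; ring].
        intros [H2 H1]. apply Hv. split; [|exact H2].
        replace v1 with (- - v1)%C by ring. rewrite H1. ring.
    + exists u2, (- u1)%C. split; [|split; [ring|]].
      * intros [H2 H1]. apply Hu. split; [|exact H2].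
        replace u1 with (- - u1)%C by ring. rewrite H1. ring.
      * transitivity (- (u1 * v2 - v1 * u2))%C; [ring | rewrite Hdet; ring].
  - intros [c1 [c2 [Hnz [Hu Hv]]]].
    assert (E1 : ((u1 * v2 - v1 * u2) * c1)%C = RtoC 0).
    { transitivity (v2 * (c1 * u1 + c2 * u2) - u2 * (c1 * v1 + c2 * v2))%C; [ring|].
      rewrite Hu, Hv. ring. }
    assert (E2 : ((u1 * v2 - v1 * u2) * c2)%C = RtoC 0).
    { transitivity (u1 * (c1 * v1 + c2 * v2) - v1 * (c1 * u1 + c2 * u2))%C; [ring|].
      rewrite Hu, Hv. ring. }
    destruct (Cmult_integral _ _ E1) as [|Hc1]; [assumption|].
    destruct (Cmult_integral _ _ E2) as [|Hc2]; [assumption|].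
    destruct (Hnz (conj Hc1 Hc2)).
Qed.

Theorem theorem1
  (T : R -> Prop) (q : R -> R) (a : R)
  (a11 a12 a21 a22 b11 b12 b21 b22 : R)
  (S S1 Cs Cs1 : C -> R -> C) :
  is_time_scale T -> bounded_set T ->
  inf_ts T <> rho_ts T (sup_ts T) ->
  kappa_ts T a ->
  continuous_on_ts T q ->
  (forall lam, is_solution T q a lam (S lam) (S1 lam) /\
               S lam a = RtoC 0 /\ S1 lam a = RtoC 1) ->
  (forall lam, is_solution T q a lam (Cs lam) (Cs1 lam) /\
               Cs lam a = RtoC 1 /\ Cs1 lam a = RtoC 0) ->
  forall lam : C,
    let al := inf_ts T in let be := rho_ts T (sup_ts T) in
    let U y y1 := bform a11 a12 a21 a22 al be y y1 in
    let V y y1 := bform b11 b12 b21 b22 al be y y1 in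
    Cminus (Cmult (U (Cs lam) (Cs1 lam)) (V (S lam) (S1 lam)))
           (Cmult (V (Cs lam) (Cs1 lam)) (U (S lam) (S1 lam))) = RtoC 0
    <-> is_eigenvalue T q a a11 a12 a21 a22 b11 b12 b21 b22 lam.
Proof.
  intros HT HB Hne Ka _ HS HC lam. unfold is_eigenvalue. cbv zeta.
  destruct (HS lam) as [SolS [HSa HS1a]]. destruct (HC lam) as [SolC [HCa HC1a]].
  rewrite det2_eq0_iff. split.
  - intros [c1 [c2 [Hnz [HU HV]]]].
    pose proof (solution_lincomb T q a lam _ _ _ _ c1 c2 SolC SolS) as Sol.
    exists (lincomb c1 c2 (Cs lam) (S lam)), (lincomb c1 c2 (Cs1 lam) (S1 lam)).
    rewrite !bform_lincomb. split; [exact Sol|]. split; [exact HU|]. split; [exact HV|].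
    apply NNPP. intros Hnontriv. apply Hnz.
    assert (Hzero : forall t, T t -> lincomb c1 c2 (Cs lam) (S lam) t = RtoC 0)
      by (intros t Tt; apply NNPP; eauto).
    split.
    + rewrite <- (Hzero a (proj1 Ka)). unfold lincomb. rewrite HCa, HSa. ring.
    + rewrite <- (delta_deriv_of_vanishing T _ a _ HT HB Hne Ka Hzero (proj1 Sol a Ka)).
      unfold lincomb. rewrite HC1a, HS1a. ring.
  - intros [y [y1 [Hy [HU [HV [t [Tt Hyt]]]]]]].
    set (g := lincomb (y a) (y1 a) (Cs lam) (S lam)).
    set (g1 := lincomb (y a) (y1 a) (Cs1 lam) (S1 lam)).
    destruct (solution_unique T q a lam y y1 g g1 HT HB Ka Hy
                (solution_lincomb T q a lam _ _ _ _ _ _ SolC SolS)) as [Hyg Hy1g];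
      [unfold g, lincomb; rewrite HCa, HSa; ring | unfold g1, lincomb; rewrite HC1a, HS1a; ring |].
    rewrite (bform_congr T _ _ _ _ y y1 g g1 HT HB Hyg Hy1g) in HU.
    rewrite (bform_congr T _ _ _ _ y y1 g g1 HT HB Hyg Hy1g) in HV.
    unfold g, g1 in HU, HV. rewrite bform_lincomb in HU, HV.
    exists (y a), (y1 a). split; [|split; [exact HU | exact HV]].
    intros [Ha0 Ha1]. apply Hyt. rewrite (Hyg t Tt). unfold g, lincomb. rewrite Ha0, Ha1. ring.
Qed.
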